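(* There is an absolute constant $C$ such that for every string $T$ of length $n$, every positive integer $d<n$, and every $i$ with $1\le i\le n-d$, $|\mathsf{MUS}(T[i..i+d-1])\bigtriangleup\mathsf{MUS}(T[i+1..i+d])|\le C$, i.e., this quantity is $O(1)$.
   Context: $T[a..b]$ denotes the substring of $T$ from position $a$ to $b$. For a string $S$ and a string $w$, $\#\mathit{occ}_S(w)$ is the number of positions at which $w$ occurs in $S$; by convention $\#\mathit{occ}_S(\varepsilon)=|S|+1$. A substring $w$ of $S$ is unique in $S$ if $\#\mathit{occ}_S(w)=1$ and repeating in $S$ if $\#\mathit{occ}_S(w)\ge 2$. For $1\le i\le j\le n$, $\mathsf{MUS}(T[i..j])$ is the set of intervals $[s,t]$ (positions in $T$) with $i\le s\le t\le j$ such that $T[s..t]$ is unique in $T[i..j]$ and every proper substring of $T[s..t]$ (including the empty string) is repeating in $T[i..j]$. $\bigtriangleup$ denotes symmetric difference. *)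

From mathcomp Require Import all_boot.
Set Implicit Arguments. Unset Strict Implicit. Unset Printing Implicit Defensive.

(* Strings are sequences over an arbitrary alphabet (eqType).
   Positions are 1-indexed as in the paper. *)

Definition substr (A : eqType) (T : seq A) (a b : nat) : seq A :=
  take (b.+1 - a) (drop a.-1 T).

(* #occ_S(w): number of positions at which w occurs in S.
   For w = [::] this yields |S|+1, matching the paper's convention. *)
Definition occ (A : eqType) (S w : seq A) : nat :=
  count (fun p => take (size w) (drop p S) == w) (iota 0 (size S - size w).+1)
  * (size w <= size S).

Definition unique_in (A : eqType) (S w : seq A) : bool := occ S w == 1.
Definition repeating_in (A : eqType) (S w : seq A) : bool := 2 <= occ S w.

Definition proper_subs_repeating (A : eqType) (S w : seq A) : bool :=
  all (fun a => all (fun l => (a + l <= size w) ==> repeating_in S (take l (drop a w)))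
                    (iota 0 (size w)))
      (iota 0 (size w).+1).

Definition is_mus (A : eqType) (T : seq A) (i j s t : nat) : bool :=
  [&& i <= s, s <= t, t <= j,
      unique_in (substr T i j) (substr T s t) &
      proper_subs_repeating (substr T i j) (substr T s t)].

Definition MUS (A : eqType) (T : seq A) (i j : nat) : seq (nat * nat) :=
  [seq p <- [seq (s, t) | s <- iota i (j.+1 - i), t <- iota i (j.+1 - i)]
     | is_mus T i j p.1 p.2].

Definition symdiff (X : eqType) (s1 s2 : seq X) : seq X :=
  [seq x <- s1 | x \notin s2] ++ [seq x <- s2 | x \notin s1].

(* When a window grows by one character on the right, a MUS can only be lost
   by acquiring a second occurrence ending at the new character, and a new MUS
   either ends there or contains a maximal proper substring ([s..t-1] or
   [s+1..t]) that was unique before and now reoccurs ending there; symmetrically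
   on the left.  Each of these kinds of change concerns at most one MUS: for two
   candidates, the copy of the shorter pinned word lies inside the copy of the
   longer one, so by uniqueness the two MUSs are nested, and distinct MUSs never
   are.  Growing a window thus loses at most 1 and gains at most 3 MUSs, and
   sliding [i..j] to [i+1..j+1] is a shrink on the left followed by a growth on
   the right. *)

From mathcomp Require Import all_boot zify boolp.
Set Implicit Arguments. Unset Strict Implicit. Unset Printing Implicit Defensive.

Section AtMost.
Variable X : eqType.
Implicit Types P Q : X -> Prop.

Definition at_most k P :=
  forall s : seq X, uniq s -> (forall x, x \in s -> P x) -> size s <= k.

Lemma at_mostW m k P Q :
  at_most m Q -> m <= k -> (forall x, P x -> Q x) -> at_most k P.
Proof.
by move=> hQ mk PQ s us sP; apply: leq_trans mk; apply: hQ => // x /sP /PQ.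
Qed.

Lemma at_mostU m n P Q :
  at_most m P -> at_most n Q -> at_most (m + n) (fun x => P x \/ Q x).
Proof.
move=> hP hQ s us sPQ.
rewrite -(count_predC (fun x => `[< P x >])) -!size_filter; apply: leq_add.
- by apply: hP => [|x]; rewrite ?filter_uniq // mem_filter => /andP [/asboolP].
- apply: hQ => [|x]; rewrite ?filter_uniq // mem_filter => /andP [/asboolPn NPx].
  by case/sPQ.
Qed.

Lemma at_most1 P : (forall x y, P x -> P y -> x = y) -> at_most 1 P.
Proof.
move=> PE [|x [|y s]] //= /andP [xys _] sP.
have xy : x = y by apply: PE; apply: sP; rewrite !inE eqxx ?orbT.
by rewrite xy mem_head in xys.
Qed.

Lemma at_most1_by_measure P (m : X -> nat) :
  (forall x y, P x -> P y -> m x <= m y -> x = y) -> at_most 1 P.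
Proof.
move=> PE; apply: at_most1 => x y Px Py.
by case: (leqP (m x) (m y)) => [|/ltnW] le; [apply: PE | symmetry; apply: PE].
Qed.

End AtMost.

Section MinimalUniqueSubstrings.
Variables (A : Type) (f : nat -> A).
Implicit Types l r s t p q n : nat.

(* Words are given by their start position in [f] and their length; windows
   [l..r] are inclusive, and [mus l r s t] says that [[s, t]] is in
   MUS(T[l..r]). *)
Definition matches p q n := forall k, k < n -> f (p + k) = f (q + k).
Definition occurs_in l r q n p := [/\ l <= p, p + n <= r.+1 & matches p q n].
Definition unique_at l r q n := forall p, occurs_in l r q n p -> p = q.
Definition repeats_at l r q n := exists2 p, p <> q & occurs_in l r q n p.
Definition ends_at e q n := exists2 p, p + n = e.+1 & matches p q n.
Definition mus l r s t :=
  [/\ l <= s, s <= t, t <= r, unique_at l r s (t.+1 - s)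
    & forall a n, a + n <= t.+1 - s -> n < t.+1 - s -> repeats_at l r (s + a) n].

Lemma matches_shift p q n a m :
  a + m <= n -> matches p q n -> matches (p + a) (q + a) m.
Proof. by move=> amn M k km; rewrite -!addnA; apply: M; lia. Qed.

Lemma unique_atNrepeats l r q n : unique_at l r q n <-> ~ repeats_at l r q n.
Proof.
split=> [U [p pq /U] // | NR p o].
by have [// | pq] := eqVneq p q; case: NR; exists p => //; apply/eqP.
Qed.

Lemma not_unique_at l r q n : ~ unique_at l r q n -> repeats_at l r q n.
Proof. by move=> NU; apply: contrapT => NR; apply: NU; apply/unique_atNrepeats. Qed.

Lemma unique_at_window l r l' r' q n :
  l' <= l -> r <= r' -> unique_at l' r' q n -> unique_at l r q n.
Proof. by move=> ll rr U p [lp pr M]; apply: U; split => //; lia. Qed.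

Lemma repeats_at_window l r l' r' q n :
  l' <= l -> r <= r' -> repeats_at l r q n -> repeats_at l' r' q n.
Proof. by move=> ll rr [p pq [lp pr M]]; exists p => //; split => //; lia. Qed.

Lemma unique_at_superword l r q n a m :
  a + n <= m -> unique_at l r (q + a) n -> unique_at l r q m.
Proof.
move=> anm U p [lp pr M].
suff : p + a = q + a by lia.
by apply: U; split; [lia | lia | exact: matches_shift M].
Qed.

(* The occurrence of the longer word at [q2] contains the unique word at the
   same offset as its copy at [p2] does. *)
Lemma unique_at_copy l r q1 n1 q2 n2 p1 p2 :
  unique_at l r q1 n1 -> l <= q2 -> q2 + n2 <= r.+1 ->
  p2 <= p1 -> p1 + n1 <= p2 + n2 -> matches p1 q1 n1 -> matches p2 q2 n2 ->
  q1 = q2 + (p1 - p2).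
Proof.
move=> U lq2 q2r p21 p12 M1 M2; symmetry; apply: U; split; [lia | lia |].
by move=> k kn1; rewrite -M1 // -addnA -M2; [congr f; lia | lia].
Qed.

Lemma repeats_at_extendr l r q n :
  unique_at l r q n -> repeats_at l r.+1 q n -> ends_at r.+1 q n.
Proof.
move=> U [p pq [lp pr M]]; exists p => //.
by case: (ltnP (p + n) r.+2) => [pr' | ]; [case: pq; apply: U | lia].
Qed.

Lemma repeats_at_extendl l r q n :
  unique_at l.+1 r q n -> repeats_at l r q n -> matches l q n.
Proof.
move=> U [p pq [lp pr M]].
by case: (ltnP l p) => [lp' | pl]; [case: pq; apply: U | have -> : l = p by lia].
Qed.

Lemma mus_nested_eq l r s1 t1 s2 t2 :
  mus l r s1 t1 -> mus l r s2 t2 -> s2 <= s1 -> t1 <= t2 -> (s1, t1) = (s2, t2).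
Proof.
case=> _ st1 _ U1 _ [_ _ _ _ R2] s21 t12.
have [// | ne] := eqVneq (s1, t1) (s2, t2); rewrite xpair_eqE in ne.
have [p ps1 o] : repeats_at l r s1 (t1.+1 - s1).
  by have := R2 (s1 - s2) (t1.+1 - s1); rewrite subnKC //; apply; lia.
by case: ps1; apply: U1.
Qed.

Lemma mus_same_start l r s t1 t2 : mus l r s t1 -> mus l r s t2 -> t1 = t2.
Proof.
move=> M1 M2; case: (leqP t1 t2) => [| /ltnW] le.
  by case: (mus_nested_eq M1 M2 (leqnn s) le).
by case: (mus_nested_eq M2 M1 (leqnn s) le).
Qed.

Lemma mus_same_end l r s1 s2 t : mus l r s1 t -> mus l r s2 t -> s1 = s2.
Proof.
move=> M1 M2; case: (leqP s1 s2) => [| /ltnW] le.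
  by case: (mus_nested_eq M2 M1 le (leqnn t)).
by case: (mus_nested_eq M1 M2 le (leqnn t)).
Qed.

Lemma mus_widen l r l' r' s t : l' <= l -> r <= r' ->
  mus l r s t -> unique_at l' r' s (t.+1 - s) -> mus l' r' s t.
Proof.
move=> ll rr [ls st tr _ R] U; split => //; try lia.
by move=> a n an nt; apply: repeats_at_window (R a n an nt).
Qed.

Lemma not_mus_inner_unique l r s t :
  l <= s -> s <= t -> t <= r -> unique_at l r s (t.+1 - s) -> ~ mus l r s t ->
  exists2 d, d <= 1 & unique_at l r (s + d) (t - s).
Proof.
move=> ls st tr U N.
have [a [n [an nt Ua]]] :
    exists a n, [/\ a + n <= t.+1 - s, n < t.+1 - s & unique_at l r (s + a) n].
  apply: contrapT => NU; apply: N; split => // a n an nt.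
  by apply: not_unique_at => Ua; apply: NU; exists a, n.
exists (minn a 1); first exact: geq_minr.
apply: (unique_at_superword (a := a - minn a 1) (n := n)); first lia.
by rewrite -addnA subnKC // geq_minl.
Qed.

(* [d] selects the maximal proper substring [s+d..t+d-1] of [[s, t]]. *)
Definition right_anchored l r d s t :=
  [/\ mus l r.+1 s t, t <= r, unique_at l r (s + d) (t - s)
    & ends_at r.+1 (s + d) (t - s)].

Definition left_anchored l r d s t :=
  [/\ mus l r s t, l < s, unique_at l.+1 r (s + d) (t - s)
    & matches l (s + d) (t - s)].

Lemma mus_extendr_lost l r s t :
  mus l r s t -> ~ mus l r.+1 s t -> ends_at r.+1 s (t.+1 - s).
Proof.
move=> M N; case: (M) => _ _ _ U _; apply: repeats_at_extendr U _.
by apply: not_unique_at => U'; apply: N; apply: mus_widen (leqnn l) (leqnSn r) M U'.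
Qed.

Lemma mus_extendl_lost l r s t :
  mus l.+1 r s t -> ~ mus l r s t -> matches l s (t.+1 - s).
Proof.
move=> M N; case: (M) => _ _ _ U _; apply: repeats_at_extendl U _.
by apply: not_unique_at => U'; apply: N; apply: mus_widen (leqnSn l) (leqnn r) M U'.
Qed.

Lemma mus_extendr_new l r s t : mus l r.+1 s t -> ~ mus l r s t ->
  t = r.+1 \/ exists2 d, d <= 1 & right_anchored l r d s t.
Proof.
move=> M N; case: (M) => ls st tr U R.
case: (leqP t r) => [tr' | rt]; last by left; lia.
have [d d1 Ud] :=
  not_mus_inner_unique ls st tr' (unique_at_window (leqnn l) (leqnSn r) U) N.
right; exists d => //; split => //.
by apply: repeats_at_extendr Ud _; apply: R; lia.
Qed.

Lemma mus_extendl_new l r s t : mus l r s t -> ~ mus l.+1 r s t ->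
  s = l \/ exists2 d, d <= 1 & left_anchored l r d s t.
Proof.
move=> M N; case: (M) => ls st tr U R.
case: (ltnP l s) => [ls' | sl]; last by left; lia.
have [d d1 Ud] :=
  not_mus_inner_unique ls' st tr (unique_at_window (leqnSn l) (leqnn r) U) N.
right; exists d => //; split => //.
by apply: repeats_at_extendl Ud _; apply: R; lia.
Qed.

Lemma mus_ends_at_eq l r s1 t1 s2 t2 : mus l r s1 t1 -> mus l r s2 t2 ->
  ends_at r.+1 s1 (t1.+1 - s1) -> ends_at r.+1 s2 (t2.+1 - s2) ->
  t1 - s1 <= t2 - s2 -> (s1, t1) = (s2, t2).
Proof.
move=> M1 M2 [p1 e1 m1] [p2 e2 m2] le.
case: (M1) (M2) => _ st1 _ U1 _ [ls2 st2 tr2 _ _].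
have e : s1 = s2 + (p1 - p2) by apply: unique_at_copy U1 ls2 _ _ _ m1 m2; lia.
by apply: mus_nested_eq M1 M2 _ _; lia.
Qed.

Lemma mus_starts_at_eq l r s1 t1 s2 t2 : mus l.+1 r s1 t1 -> mus l.+1 r s2 t2 ->
  matches l s1 (t1.+1 - s1) -> matches l s2 (t2.+1 - s2) ->
  t1 - s1 <= t2 - s2 -> (s1, t1) = (s2, t2).
Proof.
move=> M1 M2 m1 m2 le.
case: (M1) (M2) => _ st1 _ U1 _ [ls2 st2 tr2 _ _].
have e : s1 = s2 + (l - l) by apply: unique_at_copy U1 ls2 _ _ _ m1 m2; lia.
by apply: mus_nested_eq M1 M2 _ _; lia.
Qed.

Lemma right_anchored_eq l r d s1 t1 s2 t2 : d <= 1 ->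
  right_anchored l r d s1 t1 -> right_anchored l r d s2 t2 ->
  t1 - s1 <= t2 - s2 -> (s1, t1) = (s2, t2).
Proof.
move=> d1 [M1 _ U1 [p1 e1 m1]] [M2 tr2 _ [p2 e2 m2]] le.
case: (M1) (M2) => _ st1 _ _ _ [ls2 st2 _ _ _].
have e : s1 + d = s2 + d + (p1 - p2) by apply: unique_at_copy U1 _ _ _ _ m1 m2; lia.
by apply: mus_nested_eq M1 M2 _ _; lia.
Qed.

Lemma left_anchored_eq l r d s1 t1 s2 t2 : d <= 1 ->
  left_anchored l r d s1 t1 -> left_anchored l r d s2 t2 ->
  t1 - s1 <= t2 - s2 -> (s1, t1) = (s2, t2).
Proof.
move=> d1 [M1 _ U1 m1] [M2 ls2 _ m2] le.
case: (M1) (M2) => _ st1 _ _ _ [_ st2 tr2 _ _].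
have e : s1 + d = s2 + d + (l - l) by apply: unique_at_copy U1 _ _ _ _ m1 m2; lia.
by apply: mus_nested_eq M1 M2 _ _; lia.
Qed.

Lemma mus_extendr_lost_at_most1 l r :
  at_most 1 (fun x => mus l r x.1 x.2 /\ ~ mus l r.+1 x.1 x.2).
Proof.
apply: (at_most1_by_measure (m := fun x => x.2 - x.1)).
move=> [s1 t1] [s2 t2] /= [M1 N1] [M2 N2].
exact: mus_ends_at_eq M1 M2 (mus_extendr_lost M1 N1) (mus_extendr_lost M2 N2).
Qed.

Lemma mus_extendl_lost_at_most1 l r :
  at_most 1 (fun x => mus l.+1 r x.1 x.2 /\ ~ mus l r x.1 x.2).
Proof.
apply: (at_most1_by_measure (m := fun x => x.2 - x.1)).
move=> [s1 t1] [s2 t2] /= [M1 N1] [M2 N2].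
exact: mus_starts_at_eq M1 M2 (mus_extendl_lost M1 N1) (mus_extendl_lost M2 N2).
Qed.

Lemma mus_extendr_new_at_most3 l r :
  at_most 3 (fun x => mus l r.+1 x.1 x.2 /\ ~ mus l r x.1 x.2).
Proof.
pose anchored d (x : nat * nat) := right_anchored l r d x.1 x.2.
have anchored1 d : d <= 1 -> at_most 1 (anchored d).
  move=> d1; apply: (at_most1_by_measure (m := fun x => x.2 - x.1)).
  by move=> [s1 t1] [s2 t2]; apply: right_anchored_eq.
have ending1 : at_most 1 (fun x => mus l r.+1 x.1 x.2 /\ x.2 = r.+1).
  apply: at_most1 => -[s1 t1] [s2 t2] /= [M1 e1] [M2 e2]; subst t1 t2.
  by rewrite (mus_same_end M1 M2).
apply: (at_mostW (at_mostU ending1 (at_mostU (anchored1 0 isT) (anchored1 1 isT))))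
  => //.
move=> [s t] /= [M N].
case: (mus_extendr_new M N) => [e | [[| [| //]] _ P]].
- by left.
- by right; left.
- by right; right.
Qed.

Lemma mus_extendl_new_at_most3 l r :
  at_most 3 (fun x => mus l r x.1 x.2 /\ ~ mus l.+1 r x.1 x.2).
Proof.
pose anchored d (x : nat * nat) := left_anchored l r d x.1 x.2.
have anchored1 d : d <= 1 -> at_most 1 (anchored d).
  move=> d1; apply: (at_most1_by_measure (m := fun x => x.2 - x.1)).
  by move=> [s1 t1] [s2 t2]; apply: left_anchored_eq.
have starting1 : at_most 1 (fun x => mus l r x.1 x.2 /\ x.1 = l).
  apply: at_most1 => -[s1 t1] [s2 t2] /= [M1 e1] [M2 e2]; subst s1 s2.
  by rewrite (mus_same_start M1 M2).
apply: (at_mostW (at_mostU starting1 (at_mostU (anchored1 0 isT) (anchored1 1 isT))))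
  => //.
move=> [s t] /= [M N].
case: (mus_extendl_new M N) => [e | [[| [| //]] _ P]].
- by left.
- by right; left.
- by right; right.
Qed.

Lemma mus_slide_lost_at_most4 i j :
  at_most 4 (fun x => mus i j x.1 x.2 /\ ~ mus i.+1 j.+1 x.1 x.2).
Proof.
apply: (at_mostW (at_mostU (@mus_extendl_new_at_most3 i j)
                           (@mus_extendr_lost_at_most1 i.+1 j))) => // x [M N].
by have [M' | M'] := pselect (mus i.+1 j x.1 x.2); [right | left].
Qed.

Lemma mus_slide_new_at_most4 i j :
  at_most 4 (fun x => mus i.+1 j.+1 x.1 x.2 /\ ~ mus i j x.1 x.2).
Proof.
apply: (at_mostW (at_mostU (@mus_extendr_new_at_most3 i.+1 j)
                           (@mus_extendl_lost_at_most1 i j))) => // x [M N].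
by have [M' | M'] := pselect (mus i.+1 j x.1 x.2); [right | left].
Qed.

End MinimalUniqueSubstrings.

Lemma take_drop_mkseq (B : Type) (g : nat -> B) n a m :
  a + m <= n -> take m (drop a (mkseq g n)) = mkseq (fun k => g (a + k)) m.
Proof.
move=> amn; rewrite /mkseq -map_drop -map_take drop_iota take_iota add0n.
have -> : minn m (n - a) = m by lia.
by rewrite -{1}(addn0 a) iotaDl -map_comp.
Qed.

Section WordsOfStrings.
Variables (A : eqType) (f : nat -> A).
Implicit Types l r s q n : nat.

Definition word q n := mkseq (fun k => f (q + k)) n.

Lemma take_drop_word q n a m :
  a + m <= n -> take m (drop a (word q n)) = word (q + a) m.
Proof.
by move=> amn; rewrite take_drop_mkseq //; apply: eq_mkseq => k; rewrite addnA.
Qed.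

Lemma eq_wordP p q n : reflect (matches f p q n) (word p n == word q n).
Proof.
apply: (iffP eqP) => [E k kn | M].
  by have := congr1 (nth (f 0) ^~ k) E; rewrite !nth_mkseq.
apply: (@eq_from_nth _ (f 0)); rewrite !size_mkseq // => k kn.
by rewrite !nth_mkseq // M.
Qed.

Lemma occ_wordE l m q n : n <= m ->
  occ (word l m) (word q n)
  = count (fun p => word p n == word q n) (iota l (m - n).+1).
Proof.
move=> nm; rewrite /occ !size_mkseq nm muln1.
rewrite -[in RHS](addn0 l) iotaDl count_map.
apply: eq_in_count => p; rewrite mem_iota => /andP [_ pmn] /=.
by rewrite take_drop_word //; lia.
Qed.

Lemma occ_window_word l r q n : l <= q -> q + n <= r.+1 ->
  occ (word l (r.+1 - l)) (word q n)
  = (count (fun p => word p n == word q n) (rem q (iota l (r.+2 - l - n)))).+1.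
Proof.
move=> lq qr; rewrite occ_wordE; last lia.
have -> : (r.+1 - l - n).+1 = r.+2 - l - n by lia.
have qs : q \in iota l (r.+2 - l - n) by rewrite mem_iota; lia.
by move/permP: (perm_to_rem qs) => ->; rewrite /= eqxx.
Qed.

Lemma other_occP l r q n : l <= q -> q + n <= r.+1 ->
  reflect (repeats_at f l r q n)
          (has (fun p => word p n == word q n) (rem q (iota l (r.+2 - l - n)))).
Proof.
move=> lq qr; apply: (iffP hasP) => [[p] | [p pq [lp pr M]]].
  rewrite mem_rem_uniq ?iota_uniq // inE mem_iota => /andP [pq lpr] /eq_wordP M.
  by exists p; [apply/eqP | split; try lia].
exists p; last exact/eq_wordP.
rewrite mem_rem_uniq ?iota_uniq // inE mem_iota.
by apply/andP; split; [apply/eqP | lia].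
Qed.

Lemma unique_in_wordP l r q n : l <= q -> q + n <= r.+1 ->
  unique_in (word l (r.+1 - l)) (word q n) <-> unique_at f l r q n.
Proof.
move=> lq qr; have occP := other_occP lq qr.
rewrite /unique_in occ_window_word // eqSS eqn0Ngt -has_count.
split=> [/occP NR | U]; first exact/unique_atNrepeats.
by apply/occP; apply/unique_atNrepeats.
Qed.

Lemma repeating_in_wordP l r q n : l <= q -> q + n <= r.+1 ->
  reflect (repeats_at f l r q n) (repeating_in (word l (r.+1 - l)) (word q n)).
Proof.
move=> lq qr; rewrite /repeating_in occ_window_word // ltnS -has_count.
exact: other_occP.
Qed.

Lemma proper_subs_repeating_wordP l r s m : l <= s -> s + m <= r.+1 ->
  proper_subs_repeating (word l (r.+1 - l)) (word s m) <->
  (forall a n, a + n <= m -> n < m -> repeats_at f l r (s + a) n).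
Proof.
move=> ls smr; rewrite /proper_subs_repeating size_mkseq.
have subwordP a n : a + n <= m ->
    reflect (repeats_at f l r (s + a) n)
            (repeating_in (word l (r.+1 - l)) (take n (drop a (word s m)))).
  by move=> anm; rewrite take_drop_word //; apply: repeating_in_wordP; lia.
split=> [H a n anm nm | H].
  have /allP/(_ n) : all (fun n => (a + n <= m) ==> repeating_in (word l (r.+1 - l))
                                     (take n (drop a (word s m)))) (iota 0 m).
    by apply: (allP H); rewrite mem_iota; lia.
  by rewrite mem_iota anm => /(_ nm) /(subwordP _ _ anm).
apply/allP => a _; apply/allP => n; rewrite mem_iota => nm; apply/implyP => anm.
by apply/subwordP => //; apply: H.
Qed.

End WordsOfStrings.

Section Strings.
Variables (A : eqType) (x0 : A) (T : seq A).

Let char p := nth x0 T p.-1.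

Lemma substr_word a b :
  0 < a -> a <= b -> b <= size T -> substr T a b = word char a (b.+1 - a).
Proof.
move=> a0 ab bT; rewrite /substr -{1}(mkseq_nth x0 T) take_drop_mkseq; last lia.
by apply: eq_mkseq => k; rewrite /char; congr nth; lia.
Qed.

Lemma is_musP l r s t :
  0 < l -> r <= size T -> is_mus T l r s t <-> mus char l r s t.
Proof.
move=> l0 rT.
have subE a b : l <= a -> a <= b -> b <= r -> substr T a b = word char a (b.+1 - a).
  by move=> la ab br; apply: substr_word; lia.
split=> [/and5P [ls st tr] | [ls st tr U R]]; have lr : l <= r by lia.
  rewrite !subE // => U R; split => //.
    by apply/unique_in_wordP => //; lia.
  by apply/proper_subs_repeating_wordP => //; lia.
apply/and5P; split => //; rewrite !subE //.
  by apply/unique_in_wordP => //; lia.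
by apply/proper_subs_repeating_wordP => //; lia.
Qed.

Lemma mem_MUS l r x : (x \in MUS T l r) = is_mus T l r x.1 x.2.
Proof.
rewrite mem_filter; case: x => s t /=; case M: (is_mus T l r s t) => //=.
case/and5P: M => ls st tr _ _.
by apply/allpairsP; exists (s, t); rewrite /= !mem_iota; split => //; lia.
Qed.

Lemma uniq_MUS l r : uniq (MUS T l r).
Proof.
apply/filter_uniq/allpairs_uniq; rewrite ?iota_uniq //.
by move=> [a b] [c d] _ _ [-> ->].
Qed.

Lemma size_symdiff_MUS_slide i j : 0 < i -> j < size T ->
  size (symdiff (MUS T i j) (MUS T i.+1 j.+1)) <= 8.
Proof.
move=> i0 jT.
have memE l r : 0 < l -> r <= size T ->
    forall x, x \in MUS T l r <-> mus char l r x.1 x.2.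
  by move=> l0 rT x; rewrite mem_MUS; apply: is_musP.
have [memA memB] := (memE i j i0 (ltnW jT), memE i.+1 j.+1 (ltn0Sn i) jT).
rewrite size_cat -[8]/(4 + 4); apply: leq_add.
  apply: (@mus_slide_lost_at_most4 _ char i j); first exact/filter_uniq/uniq_MUS.
  move=> x; rewrite mem_filter => /andP [xB /memA xA]; split => // /memB.
  by apply/negP.
apply: (@mus_slide_new_at_most4 _ char i j); first exact/filter_uniq/uniq_MUS.
move=> x; rewrite mem_filter => /andP [xA /memB xB]; split => // /memA.
by apply/negP.
Qed.

End Strings.

Theorem corollary1 :
  exists C : nat, forall (A : eqType) (T : seq A) (d i : nat),
    0 < d -> d < size T -> 1 <= i -> i <= size T - d ->
    size (symdiff (MUS T i (i + d - 1)) (MUS T i.+1 (i + d))) <= C.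
Proof.
exists 8 => A T d i d0 dT i1 iT.
case: T dT iT => [// | x0 T'] dT iT.
have e : i + d = (i + d - 1).+1 by lia.
by rewrite {2}e; apply: (size_symdiff_MUS_slide x0); lia.
Qed.
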